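(* Let $W$ be a real vector space, $e_1,\dots,e_n\in W$ and $\phi_1,\dots,\phi_n\in\operatorname{Hom}_{\mathbb{R}}(W,\mathbb{R})$ such that (a) $\{(a_1,\dots,a_n)\in\mathbb{R}_{\ge0}^n:a_1e_1+\cdots+a_ne_n=0\}=\{0\}$; (b) $\phi_i(e_j)\ge0$ for all $i\neq j$; (c) $\{x\in\mathbb{R}_{\ge0}e_1+\cdots+\mathbb{R}_{\ge0}e_n:\phi_i(x)\ge0\text{ for all }i\}=\{0\}$. Then: (1) for $Q=(\phi_i(e_j))_{i,j}$ there are $n\times n$ matrices $A$ (lower triangular) and $B$ (upper triangular) with non-negative entries, $\det A>0$, $\det B>0$ and $AQB=-I_n$; moreover, if $Q$ is symmetric one can take $B={}^tA$; (2) $e_1,\dots,e_n$ are linearly independent in $W/\{x\in W:\phi_1(x)=\cdots=\phi_n(x)=0\}$. *)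

From HB Require Import structures.
From mathcomp Require Import all_boot all_order all_algebra.
From mathcomp Require Import reals.
Set Implicit Arguments. Unset Strict Implicit. Unset Printing Implicit Defensive.
Import Order.TTheory GRing.Theory Num.Theory.
Local Open Scope ring_scope.

Definition lower_triangular (R : nzRingType) n (A : 'M[R]_n) : Prop :=
  forall i j : 'I_n, (i < j)%N -> A i j = 0.
Definition upper_triangular (R : nzRingType) n (A : 'M[R]_n) : Prop :=
  forall i j : 'I_n, (j < i)%N -> A i j = 0.
Definition nonneg_mx (R : numDomainType) n (A : 'M[R]_n) : Prop :=
  forall i j : 'I_n, 0 <= A i j.

Definition pairing_mx (R : realType) (W : lmodType R) n
  (e : 'I_n -> W) (phi : 'I_n -> {scalar W}) : 'M[R]_n :=
  \matrix_(i, j) phi i (e j).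

Definition good_pair (R : realType) n (Q A B : 'M[R]_n) : Prop :=
  [/\ lower_triangular A, upper_triangular B, nonneg_mx A & nonneg_mx B] /\
  [/\ 0 < \det A, 0 < \det B & A *m Q *m B = - 1%:M].

From HB Require Import structures.
From mathcomp Require Import all_boot all_order all_algebra.
From mathcomp Require Import reals.
Import Order.TTheory GRing.Theory Num.Theory.
Local Open Scope ring_scope.
Set Implicit Arguments. Unset Strict Implicit.

(* Hypotheses (a) and (c) say that no nonzero nonnegative vector a has Q a >= 0,
   and (b) that Q has nonnegative off-diagonal entries.  Write Q = [[q, r], [c, Q']]
   with q a scalar: testing with e_1 forces q < 0, and then both properties pass to
   the Schur complement S = Q' + c r / (-q).  Eliminating the first row and column
   by the nonnegative unitriangular matrices [[1, 0], [c/(-q), 1]] and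
   [[1, r/(-q)], [0, 1]] leaves diag(q, S); scaling the pivot by 1/sqrt(-q) and
   applying induction to S gives (1).  Then A Q B = -1 makes Q invertible, which
   is (2). *)

Lemma lrshift_ind n (P : 'I_(1 + n) -> Prop) :
  (forall i0 : 'I_1, P (lshift n i0)) -> (forall k : 'I_n, P (rshift 1 k)) ->
  forall i, P i.
Proof. by move=> Pl Pr i; case: (split_ordP i) => [i0 ->|k ->]. Qed.

Section Triangular.
Variable R : nzRingType.

Lemma lower_triangular_mul n (A B : 'M[R]_n) :
  lower_triangular A -> lower_triangular B -> lower_triangular (A *m B).
Proof.
move=> lA lB i j lij; rewrite mxE big1 // => k _.
case: (ltnP i k) => hik; first by rewrite lA // mul0r.
by rewrite lB ?mulr0 // (leq_ltn_trans hik lij).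
Qed.

Lemma upper_triangularE n (A : 'M[R]_n) :
  upper_triangular A <-> lower_triangular A^T.
Proof.
split=> uA i j lij; first by rewrite mxE uA.
by have := uA j i lij; rewrite mxE.
Qed.

Lemma upper_triangular_mul n (A B : 'M[R]_n) :
  upper_triangular A -> upper_triangular B -> upper_triangular (A *m B).
Proof.
move=> uA uB i j lji; rewrite mxE big1 // => k _.
case: (ltnP k i) => hki; first by rewrite uA // mul0r.
by rewrite uB ?mulr0 // (leq_trans lji hki).
Qed.

Lemma lower_triangular_scalar n (a : R) : lower_triangular (a%:M : 'M_n).
Proof. by move=> i j lij; rewrite mxE eq_sym -val_eqE /= gtn_eqF. Qed.

Lemma upper_triangular_scalar n (a : R) : upper_triangular (a%:M : 'M_n).
Proof. by apply/upper_triangularE; rewrite tr_scalar_mx; apply: lower_triangular_scalar. Qed.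

Lemma lower_triangular_block n (a : 'M[R]_1) (Adl : 'M_(n, 1)) (Adr : 'M_n) :
  lower_triangular Adr -> lower_triangular (block_mx a 0 Adl Adr : 'M_(1 + n)).
Proof.
move=> lAdr; apply: lrshift_ind => i0; apply: lrshift_ind => j0 /=;
  rewrite ?block_mxEul ?block_mxEur ?block_mxEdl ?block_mxEdr ?mxE //.
- by rewrite (ord1 i0) (ord1 j0).
- by rewrite ltnNge (leq_trans _ (leq_addr _ _)) //; case: j0 => [[]].
- by rewrite ltn_add2l => /lAdr.
Qed.

Lemma upper_triangular_block n (a : 'M[R]_1) (Aur : 'M_(1, n)) (Adr : 'M_n) :
  upper_triangular Adr -> upper_triangular (block_mx a Aur 0 Adr : 'M_(1 + n)).
Proof.
move=> /upper_triangularE lAdr; apply/upper_triangularE.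
by rewrite tr_block_mx trmx0; apply: lower_triangular_block.
Qed.

End Triangular.

Section Nonneg.
Variable R : numDomainType.

Lemma nonneg_mx_mul n (A B : 'M[R]_n) :
  nonneg_mx A -> nonneg_mx B -> nonneg_mx (A *m B).
Proof. by move=> nA nB i j; rewrite mxE sumr_ge0 // => k _; rewrite mulr_ge0. Qed.

Lemma nonneg_mx_block n (a : 'M[R]_1) (Aur : 'M_(1, n)) (Adl : 'M_(n, 1)) (Adr : 'M_n) :
  0 <= a 0 0 -> (forall j, 0 <= Aur 0 j) -> (forall i, 0 <= Adl i 0) ->
  nonneg_mx Adr -> nonneg_mx (block_mx a Aur Adl Adr : 'M_(1 + n)).
Proof.
move=> na nAur nAdl nAdr; apply: lrshift_ind => i0; apply: lrshift_ind => j0;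
  by rewrite ?block_mxEul ?block_mxEur ?block_mxEdl ?block_mxEdr ?(ord1 i0) ?(ord1 j0).
Qed.

Lemma nonneg_mx_scalar n (a : R) : 0 <= a -> nonneg_mx (a%:M : 'M_n).
Proof. by move=> a_ge0 i j; rewrite mxE; case: (i == j); rewrite ?mulr1n ?mulr0n. Qed.

End Nonneg.

Definition offdiag_nonneg (R : numDomainType) n (Q : 'M[R]_n) : Prop :=
  forall i j, i != j -> 0 <= Q i j.

Definition nonneg_supervector_free (R : numDomainType) n (Q : 'M[R]_n) : Prop :=
  forall a : 'cV[R]_n,
    (forall i, 0 <= a i 0) -> (forall i, 0 <= (Q *m a) i 0) -> a = 0.

Definition triangular_factorization (R : realType) n (Q : 'M[R]_n) : Prop :=
  exists A B, good_pair Q A B /\ (Q^T = Q -> B = A^T).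

Definition schur_complement (R : fieldType) n
    (q : 'M[R]_1) (r : 'M_(1, n)) (c : 'M_(n, 1)) (Q' : 'M_n) : 'M_n :=
  Q' + (- q 0 0)^-1 *: (c *m r).

Section GoodPair.
Variables (R : realType) (n : nat).

Lemma good_pair_elim (Q P A B L U : 'M[R]_n) :
  lower_triangular L -> upper_triangular U -> nonneg_mx L -> nonneg_mx U ->
  0 < \det L -> 0 < \det U -> L *m Q *m U = P ->
  good_pair P A B -> good_pair Q (A *m L) (U *m B).
Proof.
move=> lL uU nL nU dL dU ePQ [[lA uB nA nB] [dA dB eAB]]; split; split.
- exact: lower_triangular_mul.
- exact: upper_triangular_mul.
- exact: nonneg_mx_mul.
- exact: nonneg_mx_mul.
- by rewrite det_mulmx mulr_gt0.
- by rewrite det_mulmx mulr_gt0.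
- by rewrite -eAB -ePQ !mulmxA.
Qed.

Lemma good_pair_pivot (q : R) (S A B : 'M[R]_n) :
  q < 0 -> good_pair S A B ->
  let s := (Num.sqrt (- q))^-1 in
  good_pair (block_mx q%:M 0 0 S : 'M_(1 + n))
            (block_mx s%:M 0 0 A) (block_mx s%:M 0 0 B).
Proof.
move=> q_lt0 [[lA uB nA nB] [dA dB eAB]] s.
have s_gt0 : 0 < s by rewrite invr_gt0 sqrtr_gt0 oppr_gt0.
have sqs : s * q * s = -1.
  rewrite mulrC mulrA -expr2 exprVn sqr_sqrtr ?oppr_ge0 ?(ltW q_lt0) //.
  by rewrite invrN mulNr mulVf ?ltr0_neq0.
split; split.
- exact/lower_triangular_block.
- exact/upper_triangular_block.
- by apply: nonneg_mx_block => // [|j|i]; rewrite !mxE ?(ltW s_gt0).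
- by apply: nonneg_mx_block => // [|j|i]; rewrite !mxE ?(ltW s_gt0).
- by rewrite det_lblock det_mx11 mxE mulr_gt0.
- by rewrite det_ublock det_mx11 mxE mulr_gt0.
rewrite !mulmx_block !mulmx0 !mul0mx !addr0 !add0r eAB -!scalar_mxM sqs.
by rewrite !mul0mx (scalar_mx_block 1 n) opp_block_mx !oppr0 raddfN.
Qed.

End GoodPair.

Section SchurComplement.
Variables (R : realType) (n : nat).
Variables (q : 'M[R]_1) (r : 'M[R]_(1, n)) (c : 'M[R]_(n, 1)) (Q' : 'M[R]_n).
Local Notation Q := (block_mx q r c Q' : 'M_(1 + n)).
Local Notation S := (schur_complement q r c Q').
Local Notation k := (- q 0 0)^-1.
Hypotheses (Q_offdiag : offdiag_nonneg Q) (Q_free : nonneg_supervector_free Q).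

Lemma block_row_ge0 j : 0 <= r 0 j.
Proof.
have := @Q_offdiag (lshift n 0) (rshift 1 j).
by rewrite eq_lrshift block_mxEur; apply.
Qed.

Lemma block_col_ge0 i : 0 <= c i 0.
Proof.
have := @Q_offdiag (rshift 1 i) (lshift n 0).
by rewrite eq_sym eq_lrshift block_mxEdl; apply.
Qed.

Lemma pivot_lt0 : q 0 0 < 0.
Proof.
rewrite ltNge; apply/negP => q_ge0.
have e1_ge0 : forall i, 0 <= (col_mx 1 0 : 'cV[R]_(1 + n)) i 0.
  by apply: lrshift_ind => i0; rewrite ?col_mxEu ?col_mxEd !mxE ?(ord1 i0).
have Qe1_ge0 : forall i, 0 <= (Q *m col_mx 1 0) i 0.
  rewrite mul_block_col !mulmx1 !mulmx0 !addr0.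
  by apply: lrshift_ind => i0; rewrite ?col_mxEu ?col_mxEd ?(ord1 i0) ?block_col_ge0.
move/matrixP/(_ (lshift n 0) 0): (Q_free e1_ge0 Qe1_ge0).
by rewrite col_mxEu !mxE /= => /eqP; rewrite oner_eq0.
Qed.

Lemma pivot_scale_ge0 : 0 <= k.
Proof. by rewrite invr_ge0 oppr_ge0 ltW ?pivot_lt0. Qed.

Lemma pivot_scale_mul : q 0 0 * k = -1.
Proof. by rewrite invrN mulrN divff ?ltr0_neq0 ?pivot_lt0. Qed.

Lemma schur_offdiag_nonneg : offdiag_nonneg S.
Proof.
move=> i j ij; rewrite !mxE addr_ge0 //.
  have : rshift 1 i != rshift 1 j by rewrite (inj_eq (@rshift_inj _ _)).
  by move/Q_offdiag; rewrite block_mxEdr.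
rewrite mulr_ge0 ?pivot_scale_ge0 // sumr_ge0 // => l _.
by rewrite (ord1 l) mulr_ge0 ?block_row_ge0 ?block_col_ge0.
Qed.

(* A nonnegative supervector a of S lifts to the supervector (k r a, a) of Q. *)
Lemma schur_nonneg_supervector_free : nonneg_supervector_free S.
Proof.
move=> a a_ge0 Sa_ge0.
pose a1 : 'M[R]_1 := k *: (r *m a).
have Qa : Q *m col_mx a1 a = col_mx 0 (S *m a).
  rewrite mul_block_col; congr col_mx.
    by rewrite [q]mx11_scalar mul_scalar_mx /a1 scalerA pivot_scale_mul scaleN1r addNr.
  by rewrite mulmxDl addrC /a1 -scalemxAr -scalemxAl mulmxA.
have a1_ge0 : 0 <= a1 0 0.
  rewrite !mxE mulr_ge0 ?pivot_scale_ge0 // sumr_ge0 // => l _.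
  by rewrite mulr_ge0 ?block_row_ge0.
have : col_mx a1 a = 0.
  apply: Q_free; first by apply: lrshift_ind => i0; rewrite ?col_mxEu ?col_mxEd ?(ord1 i0).
  by rewrite Qa; apply: lrshift_ind => i0; rewrite ?col_mxEu ?col_mxEd // mxE.
by move/(congr1 dsubmx); rewrite col_mxKd => ->; rewrite -col_mx0 col_mxKd.
Qed.

Definition elim_lower : 'M[R]_(1 + n) := block_mx 1 0 (k *: c) 1.
Definition elim_upper : 'M[R]_(1 + n) := block_mx 1 (k *: r) 0 1.

Lemma elim_block : elim_lower *m Q *m elim_upper = block_mx (q 0 0)%:M 0 0 S.
Proof.
rewrite /elim_lower /elim_upper !mulmx_block !mul1mx !mul0mx !mulmx1 !mulmx0 ?addr0 ?add0r.
have -> : k *: c *m q = - c.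
  by rewrite [q in _ *m q]mx11_scalar mul_mx_scalar scalerA pivot_scale_mul scaleN1r.
have -> : q *m (k *: r) = - r.
  by rewrite [q in q *m _]mx11_scalar mul_scalar_mx scalerA pivot_scale_mul scaleN1r.
by rewrite !addNr mul0mx add0r addrC -scalemxAl -mx11_scalar.
Qed.

Lemma elim_lower_good :
  [/\ lower_triangular elim_lower, nonneg_mx elim_lower & 0 < \det elim_lower].
Proof.
split; first exact/lower_triangular_block/lower_triangular_scalar.
  apply: nonneg_mx_block => [|j|i|]; rewrite ?mxE ?mulr_ge0 ?pivot_scale_ge0 ?block_col_ge0 //.
  exact: nonneg_mx_scalar ler01.
by rewrite /elim_lower det_lblock !det1 mulr1 ltr01.
Qed.

Lemma elim_upper_good :
  [/\ upper_triangular elim_upper, nonneg_mx elim_upper & 0 < \det elim_upper].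
Proof.
split; first exact/upper_triangular_block/upper_triangular_scalar.
  apply: nonneg_mx_block => [|j|i|]; rewrite ?mxE ?mulr_ge0 ?pivot_scale_ge0 ?block_row_ge0 //.
  exact: nonneg_mx_scalar ler01.
by rewrite /elim_upper det_ublock !det1 mulr1 ltr01.
Qed.

Lemma triangular_factorization_schur :
  triangular_factorization S -> triangular_factorization Q.
Proof.
move=> [A [B [gAB symAB]]].
have [lL nL dL] := elim_lower_good; have [uU nU dU] := elim_upper_good.
pose s := (Num.sqrt (- q 0 0))^-1.
exists (block_mx s%:M 0 0 A *m elim_lower), (elim_upper *m block_mx s%:M 0 0 B).
split.
  apply: good_pair_elim elim_block _ => //.
  exact: good_pair_pivot pivot_lt0 gAB.
move=> /(congr1 trmx); rewrite trmxK tr_block_mx => QT.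
have rc : r^T = c by have := congr1 dlsubmx QT; rewrite !block_mxKdl.
have Q'T : Q'^T = Q' by have := congr1 drsubmx QT; rewrite !block_mxKdr.
have ST : S^T = S by rewrite linearD /= linearZ /= trmx_mul Q'T -rc trmxK.
rewrite trmx_mul /elim_lower /elim_upper !tr_block_mx !trmx0 !trmx1 tr_scalar_mx.
by rewrite -symAB // linearZ /= -rc trmxK.
Qed.

End SchurComplement.

Lemma triangular_factorization_exists (R : realType) n (Q : 'M[R]_n) :
  offdiag_nonneg Q -> nonneg_supervector_free Q -> triangular_factorization Q.
Proof.
elim: n Q => [|n IHn] Q Q_offdiag Q_free.
  exists 1%:M, 1%:M; split; last by rewrite trmx1.
  split; first by split; move=> [].
  by split; rewrite ?det1 ?ltr01 //; apply/matrixP => -[].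
move: Q Q_offdiag Q_free; rewrite -[n.+1]/(1 + n) => Q.
rewrite -[Q]submxK => Q_offdiag Q_free.
apply: triangular_factorization_schur => //; apply: IHn.
  exact: schur_offdiag_nonneg.
exact: schur_nonneg_supervector_free.
Qed.

Lemma good_pair_unitmx (R : realType) n (Q A B : 'M[R]_n) :
  good_pair Q A B -> Q \in unitmx.
Proof.
move=> [_ [_ _ eAB]]; rewrite unitmxE unitfE; apply/eqP => detQ.
move/(congr1 determinant)/esym/eqP: eAB.
rewrite !det_mulmx detQ mulr0 mul0r -raddfN det_scalar expf_eq0.
by rewrite oppr_eq0 oner_eq0 andbF.
Qed.

Section Pairing.
Variables (R : realType) (W : lmodType R) (n : nat).
Variables (e : 'I_n -> W) (phi : 'I_n -> {scalar W}).

Lemma pairing_mulmx (v : 'cV[R]_n) i :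
  (pairing_mx e phi *m v) i 0 = phi i (\sum_j v j 0 *: e j).
Proof.
rewrite mxE raddf_sum; apply: eq_bigr => j _.
by rewrite mxE mulrC; symmetry; exact: (linearZ_LR (phi i)).
Qed.

Lemma pairing_offdiag_nonneg :
  (forall i j, i != j -> 0 <= phi i (e j)) -> offdiag_nonneg (pairing_mx e phi).
Proof. by move=> phi_e i j /phi_e; rewrite mxE. Qed.

Lemma pairing_nonneg_supervector_free :
  (forall a : 'I_n -> R, (forall i, 0 <= a i) ->
     \sum_(i < n) a i *: e i = 0 -> forall i, a i = 0) ->
  (forall x : W,
     (exists2 a : 'I_n -> R, (forall i, 0 <= a i) & x = \sum_(i < n) a i *: e i) ->
     (forall i, 0 <= phi i x) -> x = 0) ->
  nonneg_supervector_free (pairing_mx e phi).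
Proof.
move=> e_pointed cone_phi a a_ge0 Qa_ge0.
have sum0 : \sum_j a j 0 *: e j = 0.
  by apply: cone_phi => [|i]; [exists (fun j => a j 0) | rewrite -pairing_mulmx].
apply/matrixP => i j; rewrite (ord1 j) mxE.
exact: (e_pointed (fun j => a j 0)).
Qed.

End Pairing.

Unset Implicit Arguments.
Theorem lemma1p2p3 (R : realType) (W : lmodType R) (n : nat)
  (e : 'I_n -> W) (phi : 'I_n -> {scalar W})
  (ha : forall a : 'I_n -> R, (forall i, 0 <= a i) ->
          \sum_(i < n) a i *: e i = 0 -> forall i, a i = 0)
  (hb : forall i j : 'I_n, i != j -> 0 <= phi i (e j))
  (hc : forall x : W,
          (exists2 a : 'I_n -> R, (forall i, 0 <= a i) & x = \sum_(i < n) a i *: e i) ->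
          (forall i, 0 <= phi i x) -> x = 0) :
  ((exists A B : 'M[R]_n, good_pair (pairing_mx e phi) A B) /\
   ((pairing_mx e phi)^T = pairing_mx e phi ->
     exists A : 'M[R]_n, good_pair (pairing_mx e phi) A A^T)) /\
  (forall c : 'I_n -> R,
     (forall k, phi k (\sum_(j < n) c j *: e j) = 0) -> forall j, c j = 0).
Proof.
have [A [B [gAB symAB]]] := triangular_factorization_exists
  (pairing_offdiag_nonneg hb) (pairing_nonneg_supervector_free ha hc).
split; first by split=> [|QT]; [exists A, B | exists A; rewrite -symAB].
move=> c phi_c0 j; pose cv : 'cV[R]_n := \col_j c j.
have Qcv0 : pairing_mx e phi *m cv = 0.
  apply/matrixP => k i; rewrite (ord1 i) pairing_mulmx mxE -[RHS](phi_c0 k).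
  by congr (phi k _); apply: eq_bigr => l _; rewrite mxE.
have : cv = 0 by rewrite -(mulKmx (good_pair_unitmx gAB) cv) Qcv0 mulmx0.
by move/matrixP/(_ j 0); rewrite !mxE.
Qed.
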